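(* Let $f,g\colon X\to Y$ and $f',g'\colon X'\to Y'$ be continuous maps and let $\alpha\colon X'\to X$ and $\beta\colon Y'\to Y$ be homotopy equivalences such that $\beta\circ f'=f\circ\alpha$ and $\beta\circ g'=g\circ\alpha$. Then for every $u\in H^*(X;R)$, $\mathrm{hw}_{f',g'}(\alpha^*u)=\mathrm{hw}_{f,g}(u)$.
   Context: $R$ is a commutative ring with unit and $H^*(-;R)$ is cohomology with coefficients in $R$. For continuous maps $f,g\colon X\to Y$, the homotopic distance $\mathrm{D}(f,g)$ is the least integer $n\geq 0$ such that there is an open cover $\{U_0,\dots,U_n\}$ of $X$ with $f|_{U_j}\simeq g|_{U_j}$ for all $j$ ($\infty$ if none exists). Homotopy weight: for $u\in H^*(X;R)$, $\mathrm{hw}_{f,g}(u)=k+1$ where $k$ is the greatest integer such that for every topological space $A$ and every continuous map $\phi\colon A\to X$ with $\mathrm{D}(f\circ\phi,g\circ\phi)\leq k$ one has $\phi^*u=0\in H^*(A;R)$; and $\mathrm{hw}_{f,g}(0)=\infty$. *)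

From HB Require Import structures.
From mathcomp Require Import all_boot all_order all_algebra.
From mathcomp Require Import all_classical all_reals.
From mathcomp Require Import topology normedtype.
From mathcomp Require Import Rstruct Rstruct_topology.


Set Implicit Arguments.
Unset Strict Implicit.
Unset Printing Implicit Defensive.

Import Order.TTheory GRing.Theory Num.Theory.
Local Open Scope classical_set_scope.
Local Open Scope ring_scope.

Notation real := Rdefinitions.R.

(* f|_U ~ g|_U as maps U -> Y (U with the subspace topology): a map
   H : U x [0,1] -> Y, continuous for the subspace topology of U x [0,1]
   in X x R, with H(x,0) = f x and H(x,1) = g x on U. *)
Definition homotopic_on {X Y : topologicalType} (U : set X) (f g : X -> Y) : Prop :=
  exists H : X * real -> Y,
    {within U `*` `[0%R, 1%R], continuous H} /\
    (forall x, U x -> H (x, 0%R) = f x) /\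
    (forall x, U x -> H (x, 1%R) = g x).

Definition homotopic {X Y : topologicalType} (f g : X -> Y) : Prop :=
  homotopic_on setT f g.

Definition homotopy_equivalence {X Y : topologicalType} (a : X -> Y) : Prop :=
  continuous a /\
  exists b : Y -> X, continuous b /\ homotopic (b \o a) idfun /\ homotopic (a \o b) idfun.

Definition hdist_cover {X Y : topologicalType} (f g : X -> Y) (n : nat) : Prop :=
  exists U : 'I_n.+1 -> set X,
    (forall j, open (U j)) /\ (\bigcup_j U j = setT) /\
    (forall j, homotopic_on (U j) f g).

(* D(f,g) <= k  (k an integer; D is the least such n, or infinity). *)
Definition hdist_le {X Y : topologicalType} (f g : X -> Y) (k : int) : Prop :=
  exists n : nat, (n%:Z <= k)%R /\ hdist_cover f g n.

Definition simplex_space (n : nat) := {ptws 'I_n.+1 -> real}.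

Definition std_simplex (n : nat) : set (simplex_space n) :=
  [set x | (forall i, (0 <= x i)%R) /\ (\sum_i x i = 1)%R].
Arguments std_simplex n : clear implicits.

(* i-th face inclusion  Delta^n -> Delta^{n+1} (insert a 0 at coordinate i) *)
Definition face_map (n : nat) (i : 'I_n.+2) (x : simplex_space n)
  : simplex_space n.+1 :=
  fun j => match unlift i j with Some k => x k | None => 0%R end.

(* A singular n-simplex of X is a continuous map Delta^n -> X.  We represent it
   by any map sigma : R^{n+1} -> X continuous on Delta^n; two such maps agreeing
   on Delta^n represent the same simplex. *)
Definition is_sing_simplex {X : topologicalType} {n : nat}
  (s : simplex_space n -> X) : Prop :=
  {within std_simplex n, continuous s}.

Definition cochain (K : comPzRingType) (X : topologicalType) (n : nat) :=
  (simplex_space n -> X) -> K.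

(* A genuine cochain (function on singular simplices): invariant under
   agreement on Delta^n, and 0 on maps that are not singular simplices. *)
Definition is_cochain {K : comPzRingType} {X : topologicalType} {n : nat}
  (c : cochain K X n) : Prop :=
  (forall s t, (forall x, std_simplex n x -> s x = t x) -> c s = c t) /\
  (forall s, ~ is_sing_simplex s -> c s = 0%R).

Definition coboundary {K : comPzRingType} {X : topologicalType} {n : nat}
  (c : cochain K X n) : cochain K X n.+1 :=
  fun s => if `[< is_sing_simplex s >] then
             (\sum_(i < n.+2) (-1) ^+ i * c (s \o face_map i))%R
           else 0%R.

Definition is_cocycle {K : comPzRingType} {X : topologicalType} {n : nat}
  (c : cochain K X n) : Prop :=
  is_cochain c /\ forall s, coboundary c s = 0%R.

Definition is_coboundary {K : comPzRingType} {X : topologicalType} (n : nat)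
  : cochain K X n -> Prop :=
  match n return cochain K X n -> Prop with
  | 0 => fun c => forall s, c s = 0%R
  | m.+1 => fun c => exists b : cochain K X m,
                is_cochain b /\ forall s, c s = coboundary b s
  end.

Definition pullback {K : comPzRingType} {A X : topologicalType} (phi : A -> X)
  {n : nat} (c : cochain K X n) : cochain K A n :=
  fun s => if `[< is_sing_simplex s >] then c (phi \o s) else 0%R.

(* An element u of H^*(X;K) = (+)_n H^n(X;K) is given by a family of
   cocycle representatives u n, all but finitely many of which are
   coboundaries. *)
Definition cohom_elt {K : comPzRingType} {X : topologicalType}
  (u : forall n, cochain K X n) : Prop :=
  (forall n, is_cocycle (u n)) /\
  exists N : nat, forall n, (N < n)%N -> is_coboundary (u n).

Definition cohom_zero {K : comPzRingType} {X : topologicalType}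
  (u : forall n, cochain K X n) : Prop :=
  forall n, is_coboundary (u n).

Definition cohom_pullback {K : comPzRingType} {A X : topologicalType}
  (phi : A -> X) (u : forall n, cochain K X n) : forall n, cochain K A n :=
  fun n => pullback phi (u n).

Definition hw_prop {K : comPzRingType} {X Y : topologicalType} (f g : X -> Y)
  (u : forall n, cochain K X n) (k : int) : Prop :=
  forall (A : topologicalType) (phi : A -> X), continuous phi ->
    hdist_le (f \o phi) (g \o phi) k -> cohom_zero (cohom_pullback phi u).

Definition hw_greatest {K : comPzRingType} {X Y : topologicalType} (f g : X -> Y)
  (u : forall n, cochain K X n) (k : int) : Prop :=
  hw_prop f g u k /\ forall j, hw_prop f g u j -> (j <= k)%R.

(* hw_{f,g}(u) in N u {oo}: None stands for oo. *)
Definition hw {K : comPzRingType} {X Y : topologicalType} (f g : X -> Y)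
  (u : forall n, cochain K X n) : option nat :=
  match pselect (cohom_zero u) with
  | left _ => None
  | right _ =>
      match pselect (exists k, hw_greatest f g u k) with
      | left e => Some `|(projT1 (cid e) + 1)%R|%N
      | right _ => None
      end
  end.

(* Homotopy weight quantifies over test maps phi : A -> X, and the homotopy
   equivalences turn test maps for (f, g) and for (f', g') into each other.
   A test map phi into X' gives alpha o phi into X, and every homotopy
   f' phi ~ g' phi on an open set is carried by beta to f alpha phi ~ g alpha phi.
   Conversely, a test map phi into X gives alpha' o phi into X' (alpha' a
   homotopy inverse of alpha); since f' alpha' ~ beta' f and g' alpha' ~ beta' g,
   a homotopy f phi ~ g phi carried by beta' yields f' alpha' phi ~ g' alpha' phi,
   and (alpha' phi)^* alpha^* u = phi^* u because alpha alpha' ~ id.  The same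
   homotopy invariance of cohomology shows that alpha^* u = 0 iff u = 0.  It is
   proved with the prism operator: the standard triangulation of
   Delta^m x [0,1] gives a cochain homotopy between h0^* and h1^*. *)

From mathcomp Require Import all_boot all_order all_algebra.
From mathcomp Require Import all_classical all_reals topology normedtype.
From mathcomp Require Import Rstruct Rstruct_topology.
From mathcomp Require Import lra zify.

Set Implicit Arguments.
Unset Strict Implicit.
Unset Printing Implicit Defensive.
Import Order.TTheory GRing.Theory Num.Theory.
Local Open Scope classical_set_scope.
Local Open Scope ring_scope.

(** * Continuity and homotopies on subspaces *)

Lemma continuousT_comp {T U V : topologicalType} (f : T -> U) (g : U -> V) :
  continuous f -> continuous g -> continuous (g \o f).
Proof. by move=> cf cg x; exact: continuous_comp (cf x) (cg _). Qed.

Section within_continuity.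
Context {T U V : topologicalType}.

Lemma subspace_continuous_comp (A : set T) (B : set U) (g : T -> U) (f : U -> V) :
  (forall x, A x -> B (g x)) -> {within A, continuous g} -> {within B, continuous f} ->
  {within A, continuous (f \o g)}.
Proof.
move=> AB /subspace_continuousP cg /subspace_continuousP cf.
apply/subspace_continuousP => x Ax; apply: cvg_comp (cf _ (AB _ Ax)).
move=> P /= BP; change (within A (nbhs x) [set y | P (g y)]).
have gBP : within A (nbhs x) [set y | B (g y) -> P (g y)] := cg _ Ax _ BP.
apply: filterS (filterI gBP (withinT _ _)) => y [BPy Ay].
exact: BPy (AB _ Ay).
Qed.

Lemma within_continuous_pair (A : set T) (g1 : T -> U) (g2 : T -> V) :
  {within A, continuous g1} -> {within A, continuous g2} ->
  {within A, continuous (fun x => (g1 x, g2 x))}.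
Proof.
move=> /subspace_continuousP c1 /subspace_continuousP c2.
by apply/subspace_continuousP => x Ax; exact: cvg_pair (c1 _ Ax) (c2 _ Ax).
Qed.

Lemma within_continuous_closed_cover (D C1 C2 : set T) (h : T -> U) :
  closed C1 -> closed C2 -> D `<=` C1 `|` C2 ->
  {within D `&` C1, continuous h} -> {within D `&` C2, continuous h} ->
  {within D, continuous h}.
Proof.
have local C x P : closed C -> {within D `&` C, continuous h} -> D x ->
    nbhs (h x) P -> nbhs x (fun y => D y -> C y -> P (h y)).
  move=> cC /subspace_continuousP cDC Dx hxP.
  have [Cx|nCx] := pselect (C x).
    have hDC : nbhs x [set y | (D `&` C) y -> P (h y)] := cDC x (conj Dx Cx) _ hxP.
    by apply: filterS hDC => y DCP Dy Cy; exact: DCP.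
  have : nbhs x (~` C) by apply: open_nbhs_nbhs; split => //; exact: closed_openC.
  by apply: filterS => y nCy _ /nCy.
move=> cC1 cC2 DC h1 h2; apply/subspace_continuousP => x Dx P hxP.
apply: filterS (filterI (local _ _ _ cC1 h1 Dx hxP) (local _ _ _ cC2 h2 Dx hxP)).
by move=> y [P1 P2] Dy; case: (DC _ Dy) => [/(P1 Dy)|/(P2 Dy)].
Qed.

End within_continuity.

Lemma continuous_ptws (T : topologicalType) (I : Type) (g : T -> {ptws I -> real}) :
  (forall i, continuous (fun x => g x i)) -> continuous g.
Proof.
move=> h x; apply/cvg_sup => i A /=; rewrite nbhsE => -[B [[C oC <-] Cgxi] BA].
have : nbhs x [set y | C (g y i)] by apply: h; exact: open_nbhs_nbhs.
by rewrite nbhsE => -[D oD DC]; exists D => // y /DC; exact: BA.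
Qed.

Lemma real_continuousD (T : topologicalType) (f g : T -> real) :
  continuous f -> continuous g -> continuous (fun x => f x + g x).
Proof. by move=> cf cg x; exact: (@cvgD _ real^o _ _ _ f g _ _ (cf x) (cg x)). Qed.

Lemma real_continuousB (T : topologicalType) (f g : T -> real) :
  continuous f -> continuous g -> continuous (fun x => f x - g x).
Proof. by move=> cf cg x; exact: (@cvgB _ real^o _ _ _ f g _ _ (cf x) (cg x)). Qed.

Section homotopic_on.
Context {X Y : topologicalType}.
Implicit Types (U : set X) (f g h : X -> Y).

Lemma homotopic_on_eq U f g f' g' : {in U, f =1 f'} -> {in U, g =1 g'} ->
  homotopic_on U f g -> homotopic_on U f' g'.
Proof.
move=> ef eg [H [cH [H0 H1]]]; exists H; split => //.
by split => x Ux; rewrite -?ef -?eg ?inE ?H0 ?H1.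
Qed.

Lemma homotopy_reparam {A : topologicalType} (D : set (A * real)) U
    (H : X * real -> Y) (phi : A -> X) (r : real -> real) :
  continuous phi -> continuous r ->
  (forall p, D p -> U (phi p.1) /\ r p.2 \in `[0%R, 1%R]) ->
  {within U `*` `[0%R, 1%R], continuous H} ->
  {within D, continuous (fun p => H (phi p.1, r p.2))}.
Proof.
move=> cphi cr DU cH.
apply: (@subspace_continuous_comp _ _ _ D _ (fun p => (phi p.1, r p.2)) _ _ _ cH).
  by move=> p /DU.
apply: continuous_subspaceT => p.
have cfst : {for p, continuous fst} by case: (p) => *; exact: cvg_fst.
have csnd : {for p, continuous snd} by case: (p) => *; exact: cvg_snd.
exact: cvg_pair (continuous_comp cfst (cphi _)) (continuous_comp csnd (cr _)).
Qed.

Lemma homotopic_on_sym U f g : homotopic_on U f g -> homotopic_on U g f.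
Proof.
move=> [H [cH [H0 H1]]]; exists (fun p => H (p.1, 1 - p.2)); split; last first.
  by split => x Ux /=; rewrite ?subr0 ?subrr ?H0 ?H1.
apply: (homotopy_reparam (phi := id) (r := fun t => 1 - t) _ _ _ cH) => [x||].
- exact: cvg_id.
- by apply: real_continuousB => [|t]; [exact: cst_continuous | exact: cvg_id].
move=> [x t] [/= Ux]; rewrite !in_itv /= => /andP[t0 t1]; split => //.
by apply/andP; split; lra.
Qed.

Lemma homotopic_on_trans U f g h :
  homotopic_on U f g -> homotopic_on U g h -> homotopic_on U f h.
Proof.
move=> [H1 [c1 [H10 H11]]] [H2 [c2 [H20 H21]]].
pose H p := if p.2 <= 2^-1 then H1 (p.1, 2 * p.2) else H2 (p.1, 2 * p.2 - 1).
have c2x : continuous (fun t : real => 2 * t) by exact: mulrl_continuous.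
have closed_snd (C : set real) : closed C -> closed [set p : X * real | C p.2].
  by move=> cC; apply: preimage_closed => // p _; exact: cvg_snd.
exists H; split; last first.
  split=> x Ux; rewrite /H /=; first by rewrite ifT ?mulr0 ?H10 //; lra.
  have -> : (1 : real) <= 2^-1 = false by apply/negbTE; rewrite -ltNge; lra.
  by rewrite (_ : 2 * 1 - 1 = 1) ?H21 //; lra.
apply: (within_continuous_closed_cover (closed_snd _ (@closed_le real 2^-1))
  (closed_snd _ (@closed_ge real 2^-1))).
- by move=> p _ /=; case: (lerP p.2 2^-1) => ?; [left | right; lra].
- apply: subspace_eq_continuous (_ : {within _, continuous (fun p => H1 (p.1, 2 * p.2))}).
    by move=> p; rewrite inE /from_subspace /H => -[_ /= ->].
  apply: (homotopy_reparam (phi := id) _ c2x _ c1) => [x|]; first exact: cvg_id.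
  move=> [x t] [[/= Ux]]; rewrite !in_itv /= => /andP[t0 t1] th.
  by split => //; apply/andP; split; lra.
- apply: subspace_eq_continuous (_ : {within _, continuous (fun p => H2 (p.1, 2 * p.2 - 1))}).
    move=> [x t]; rewrite inE /from_subspace /H => -[[/= Ux _] th]; case: ifP => // th'.
    have -> : t = 2^-1 by apply/eqP; rewrite eq_le th' th.
    by rewrite (_ : 2 * 2^-1 = 1) ?subrr ?H11 ?H20 //; lra.
  apply: (homotopy_reparam (phi := id) (r := fun t => 2 * t - 1) _ _ _ c2) => [x||].
  - exact: cvg_id.
  - by apply: real_continuousB => //; exact: cst_continuous.
  move=> [x t] [[/= Ux]]; rewrite !in_itv /= => /andP[t0 t1] th.
  by split => //; apply/andP; split; lra.
Qed.

Lemma homotopic_on_comp {Z : topologicalType} U f g (k : Y -> Z) :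
  continuous k -> homotopic_on U f g -> homotopic_on U (k \o f) (k \o g).
Proof.
move=> ck [H [cH [H0 H1]]]; exists (k \o H); split; last first.
  by split => x Ux /=; rewrite ?H0 ?H1.
by apply: (subspace_continuous_comp (B := setT) _ cH) => //; exact: continuous_subspaceT.
Qed.

Lemma homotopic_on_precomp {A : topologicalType} (V : set A) U f g (phi : A -> X) :
  continuous phi -> (forall a, V a -> U (phi a)) -> homotopic_on U f g ->
  homotopic_on V (f \o phi) (g \o phi).
Proof.
move=> cphi VU [H [cH [H0 H1]]]; exists (fun p => H (phi p.1, p.2)); split; last first.
  by split => a Va /=; rewrite ?H0 ?H1 //; exact: VU.
apply: (homotopy_reparam (r := id) _ _ _ cH) => // [t|[a t]]; first exact: cvg_id.
move=> [/= Va It]; split => //; exact: VU.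
Qed.

End homotopic_on.

(** * Barycentric coordinates *)

(* Points of the standard simplex are handled through their coordinates
   extended by 0 to all of nat, so that face and degeneracy maps become
   index shifts on sequences. *)
Definition coordn {n} (x : simplex_space n) (k : nat) : real :=
  if (k < n.+1)%N then x (inord k) else 0.

Definition insert0 (j : nat) (y : nat -> real) (k : nat) : real :=
  if (k < j)%N then y k else if k == j then 0 else y k.-1.

Definition merge2 (i : nat) (y : nat -> real) (k : nat) : real :=
  if (k < i)%N then y k else if k == i then y k + y k.+1 else y k.+1.

Definition psum (y : nat -> real) (N : nat) : real := \sum_(k < N) y k.

Lemma coordn_ord n (x : simplex_space n) (k : 'I_n.+1) : coordn x k = x k.
Proof. by rewrite /coordn ltn_ord inord_val. Qed.

Lemma simplex_eq n (x y : simplex_space n) :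
  (forall k, (k < n.+1)%N -> coordn x k = coordn y k) -> x = y.
Proof. by move=> h; apply: funext => k; rewrite -!coordn_ord; exact: h. Qed.

Lemma coordn_face n (j : 'I_n.+2) (x : simplex_space n) :
  coordn (face_map j x) = insert0 j (coordn x).
Proof.
apply: funext => k; rewrite /coordn /insert0 /face_map.
have [kn|kn] := ltnP k n.+2; last first.
  by move: (ltn_ord j) => jn; rewrite !ifF //; lia.
case: unliftP => [[m mn] /(congr1 val)|/(congr1 val)]; rewrite /= inordK //; last first.
  by move=> ->; rewrite ltnn eqxx.
rewrite /bump; case: (leqP j m) => jm -> /=; rewrite ?add1n ?add0n;
  repeat (case: ifP => ?; try (exfalso; lia));
  by f_equal; apply: val_inj; rewrite /= inordK; lia.
Qed.

Lemma coordn_face_inord n j (x : simplex_space n) : (j < n.+2)%N ->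
  coordn (face_map (inord j) x) = insert0 j (coordn x).
Proof. by move=> jn; rewrite coordn_face inordK. Qed.

Ltac case_indices :=
  repeat (case: ifP => ?); try (exfalso; lia);
  try (by congr (_ _); lia);
  try (by rewrite ?add0r ?addr0; congr (_ _); lia);
  try (by congr (_ _ + _ _); congr (_ _); lia);
  try (by f_equal; f_equal; lia).

Lemma merge2_insert0_lt i j y k :
  (j < i)%N -> merge2 i (insert0 j y) k = insert0 j (merge2 i.-1 y) k.
Proof. by move=> ji; rewrite /merge2 /insert0; case_indices. Qed.

Lemma merge2_insert0_gt i j y k :
  (i.+1 < j)%N -> merge2 i (insert0 j y) k = insert0 j.-1 (merge2 i y) k.
Proof. by move=> ij; rewrite /merge2 /insert0; case_indices. Qed.

Lemma merge2_insert0 i y k : merge2 i (insert0 i y) k = y k.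
Proof. by rewrite /merge2 /insert0; case_indices. Qed.

Lemma merge2_insert0S i y k : merge2 i (insert0 i.+1 y) k = y k.
Proof. by rewrite /merge2 /insert0; case_indices. Qed.

Lemma psum0 y : psum y 0 = 0.
Proof. by rewrite /psum big_ord0. Qed.

Lemma psumS y N : psum y N.+1 = psum y N + y N.
Proof. by rewrite /psum big_ord_recr. Qed.

Lemma psum_insert0 j y N : psum (insert0 j y) N = if (N <= j)%N then psum y N else psum y N.-1.
Proof.
elim: N => [|N IH]; first by rewrite !psum0.
rewrite psumS IH /insert0; case: (ltngtP N j) => [|jN|->]; rewrite ?psumS ?addr0 //.
by case: N jN {IH} => [|N] //= _; rewrite psumS.
Qed.

Lemma psum_merge2 i y N : psum (merge2 i y) N = if (N <= i)%N then psum y N else psum y N.+1.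
Proof.
elim: N => [|N IH]; first by rewrite !psum0.
rewrite psumS IH /merge2; case: (ltngtP N i) => [||->]; rewrite ?psumS //.
by rewrite addrA -!psumS.
Qed.

Lemma psum_le_add y N d : (forall k, 0 <= y k) -> psum y N <= psum y (N + d).
Proof.
move=> y0; elim: d => [|d IH]; first by rewrite addn0.
by rewrite addnS psumS (le_trans IH) // lerDl.
Qed.

Lemma std_simplexE n (x : simplex_space n) :
  std_simplex n x <-> (forall k, 0 <= coordn x k) /\ psum (coordn x) n.+1 = 1.
Proof.
have eS : \sum_i x i = psum (coordn x) n.+1.
  by apply: eq_bigr => k _; rewrite coordn_ord.
split => -[x0 x1]; split.
- by move=> k; rewrite /coordn; case: ifP.
- by rewrite -eS.
- by move=> k; rewrite -coordn_ord.
- by rewrite eS.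
Qed.

Lemma face_map_simplex n (j : 'I_n.+2) (x : simplex_space n) :
  std_simplex n x -> std_simplex n.+1 (face_map j x).
Proof.
move=> /std_simplexE [x0 x1]; apply/std_simplexE; split.
  by move=> k; rewrite coordn_face /insert0; case: ifP => // _; case: ifP.
rewrite coordn_face psum_insert0 ifF //.
by move: (ltn_ord j) => jn; lia.
Qed.

(* [merge_map m i] adds up the coordinates i and i+1 of a point of the
   (m+1)-simplex; together with [prism_time m i] it maps the (m+1)-simplex
   onto the i-th simplex of the standard triangulation of the prism
   Delta^m x [0,1]. *)
Definition merge_map (m i : nat) (x : simplex_space m.+1) : simplex_space m :=
  fun k => merge2 i (coordn x) k.

Definition prism_time (m i : nat) (x : simplex_space m.+1) : real :=
  1 - psum (coordn x) i.+1.

Arguments merge_map m i x : clear implicits.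
Arguments prism_time m i x : clear implicits.

Lemma coordn_merge_map m i (x : simplex_space m.+1) : (i <= m)%N ->
  coordn (merge_map m i x) = merge2 i (coordn x).
Proof.
move=> im; apply: funext => k.
rewrite {1}/coordn /merge_map; case: ifP => km; first by rewrite inordK.
by rewrite /merge2 !ifF /coordn ?ifF //; lia.
Qed.

Lemma merge_map_simplex m i (x : simplex_space m.+1) : (i <= m)%N ->
  std_simplex m.+1 x -> std_simplex m (merge_map m i x).
Proof.
move=> im /std_simplexE [x0 x1]; apply/std_simplexE; split.
  by move=> k; rewrite coordn_merge_map // /merge2; do 2 case: ifP => _ //; exact: addr_ge0.
by rewrite coordn_merge_map // psum_merge2 ifF //; lia.
Qed.

Lemma prism_time_itv m i (x : simplex_space m.+1) : (i <= m)%N ->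
  std_simplex m.+1 x -> prism_time m i x \in `[0%R, 1%R].
Proof.
move=> im /std_simplexE [x0 x1]; rewrite /prism_time in_itv /=; apply/andP; split.
  by rewrite subr_ge0 -x1 (_ : m.+2 = i.+1 + (m.+1 - i))%N ?psum_le_add //; lia.
by rewrite lerBlDr lerDl -(psum0 (coordn x)) -[i.+1]add0n psum_le_add.
Qed.

Lemma merge_map_face_diag m i (x : simplex_space m) : (i <= m)%N ->
  merge_map m i (face_map (inord i) x) = x.
Proof.
move=> im; apply: simplex_eq => l _.
by rewrite coordn_merge_map // coordn_face_inord ?merge2_insert0 //; lia.
Qed.

Lemma merge_map_face_diagS m i (x : simplex_space m) : (i <= m)%N ->
  merge_map m i (face_map (inord i.+1) x) = x.
Proof.
move=> im; apply: simplex_eq => l _.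
by rewrite coordn_merge_map // coordn_face_inord ?merge2_insert0S //; lia.
Qed.

Lemma merge_map_face_lt k i j (x : simplex_space k.+1) : (j < i)%N -> (i <= k.+1)%N ->
  merge_map k.+1 i (face_map (inord j) x) = face_map (inord j) (merge_map k i.-1 x).
Proof.
move=> ji ik; apply: simplex_eq => l _.
by rewrite coordn_merge_map // !coordn_face_inord ?coordn_merge_map ?merge2_insert0_lt //; lia.
Qed.

Lemma merge_map_face_gt k i j (x : simplex_space k.+1) : (i.+1 < j)%N -> (j <= k.+2)%N ->
  merge_map k.+1 i (face_map (inord j) x) = face_map (inord j.-1) (merge_map k i x).
Proof.
move=> ij jk; apply: simplex_eq => l _.
by rewrite coordn_merge_map ?coordn_face_inord ?coordn_merge_map ?merge2_insert0_gt //; lia.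
Qed.

Lemma coordn_continuous n k : continuous (fun x : simplex_space n => coordn x k).
Proof.
rewrite /coordn; case: (k < n.+1)%N; last exact: cst_continuous.
exact: (@proj_continuous _ (fun _ : 'I_n.+1 => real) (inord k)).
Qed.

Lemma psum_continuous n N : continuous (fun x : simplex_space n => psum (coordn x) N).
Proof.
elim: N => [|N IH].
  rewrite (_ : (fun x => _) = fun=> 0); first exact: cst_continuous.
  by apply: funext => x; rewrite psum0.
rewrite (_ : (fun x => _) = fun x => psum (coordn x) N + coordn x N).
  by apply: real_continuousD => //; exact: coordn_continuous.
by apply: funext => x; rewrite psumS.
Qed.

Lemma prism_time_continuous m i : continuous (prism_time m i).
Proof.
by apply: real_continuousB; [exact: cst_continuous | exact: psum_continuous].
Qed.

Lemma merge_map_continuous m i : continuous (merge_map m i).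
Proof.
apply: continuous_ptws => k; rewrite /merge_map /merge2.
case: (k < i)%N; first exact: coordn_continuous.
case: (_ == _); last exact: coordn_continuous.
by apply: real_continuousD; exact: coordn_continuous.
Qed.

Lemma face_map_continuous n (j : 'I_n.+2) : continuous (face_map j : simplex_space n -> _).
Proof.
apply: continuous_ptws => k; rewrite /face_map.
case: (unlift j k) => [k'|]; last exact: cst_continuous.
exact: (@proj_continuous _ (fun _ : 'I_n.+1 => real) k').
Qed.

(** * Singular cochains and the prism operator *)

Section singular_cochains.
Context {K : comPzRingType}.

Lemma sing_simplex_eq {X : topologicalType} n (s t : simplex_space n -> X) :
  (forall x, std_simplex n x -> s x = t x) -> is_sing_simplex s -> is_sing_simplex t.
Proof. by move=> st; apply: subspace_eq_continuous => x; rewrite inE => /st. Qed.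

Lemma sing_simplex_comp {X Y : topologicalType} n (phi : X -> Y) (s : simplex_space n -> X) :
  continuous phi -> is_sing_simplex s -> is_sing_simplex (phi \o s).
Proof.
move=> cphi cs; apply: (subspace_continuous_comp (B := setT) _ cs) => //.
exact: continuous_subspaceT.
Qed.

Lemma sing_simplex_face {X : topologicalType} n (j : 'I_n.+2) (s : simplex_space n.+1 -> X) :
  is_sing_simplex s -> is_sing_simplex (s \o face_map j).
Proof.
move=> cs; apply: (subspace_continuous_comp _ _ cs); first exact: face_map_simplex.
exact/continuous_subspaceT/face_map_continuous.
Qed.

Lemma coboundary_nonsing {X : topologicalType} n (c : cochain K X n) s :
  ~ is_sing_simplex s -> coboundary c s = 0.
Proof. by move=> ns; rewrite /coboundary asboolF. Qed.

Lemma coboundaryD {X : topologicalType} n (b1 b2 : cochain K X n) s :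
  coboundary (fun t => b1 t + b2 t) s = coboundary b1 s + coboundary b2 s.
Proof.
rewrite /coboundary; case: asboolP => _; last by rewrite addr0.
by rewrite -big_split; apply: eq_bigr => i _; rewrite mulrDr.
Qed.

Lemma coboundaryB {X : topologicalType} n (b1 b2 : cochain K X n) s :
  coboundary (fun t => b1 t - b2 t) s = coboundary b1 s - coboundary b2 s.
Proof.
rewrite /coboundary; case: asboolP => _; last by rewrite subr0.
by rewrite -sumrB; apply: eq_bigr => i _; rewrite mulrBr.
Qed.

Lemma is_cochainD {X : topologicalType} n (b1 b2 : cochain K X n) :
  is_cochain b1 -> is_cochain b2 -> is_cochain (fun t => b1 t + b2 t).
Proof.
move=> [e1 z1] [e2 z2]; split => [s t st|s ns]; first by rewrite (e1 _ _ st) (e2 _ _ st).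
by rewrite z1 // z2 // addr0.
Qed.

Lemma is_cochainB {X : topologicalType} n (b1 b2 : cochain K X n) :
  is_cochain b1 -> is_cochain b2 -> is_cochain (fun t => b1 t - b2 t).
Proof.
move=> [e1 z1] [e2 z2]; split => [s t st|s ns]; first by rewrite (e1 _ _ st) (e2 _ _ st).
by rewrite z1 // z2 // subr0.
Qed.

Context {A X : topologicalType} (phi : A -> X).
Hypothesis cphi : continuous phi.

Lemma pullback_comp {B : topologicalType} (psi : B -> A) n (c : cochain K X n) :
  continuous psi -> pullback psi (pullback phi c) = pullback (phi \o psi) c.
Proof.
move=> cpsi; apply: funext => s; rewrite /pullback.
by case: asboolP => // cs; rewrite asboolT //; exact: sing_simplex_comp.
Qed.

Lemma is_cochain_pullback n (c : cochain K X n) :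
  is_cochain c -> is_cochain (pullback phi c).
Proof.
move=> [ce cz]; split => [s t st|s ns]; last by rewrite /pullback asboolF.
rewrite /pullback; case: asboolP => cs; case: asboolP => ct //.
- by apply: ce => x sx /=; rewrite st.
- by case: ct; exact: sing_simplex_eq cs.
- by case: cs; apply: sing_simplex_eq ct => x /st.
Qed.

Lemma pullback_coboundary n (c : cochain K X n) s :
  pullback phi (coboundary c) s = coboundary (pullback phi c) s.
Proof.
rewrite /pullback /coboundary; case: asboolP => // cs.
rewrite asboolT; last exact: sing_simplex_comp.
apply: eq_bigr => i _; rewrite asboolT //; exact: sing_simplex_face.
Qed.

Lemma is_coboundary_pullback n (c : cochain K X n) :
  is_coboundary c -> is_coboundary (pullback phi c).
Proof.
case: n c => [|n] c /=; first by move=> c0 s; rewrite /pullback c0; case: asboolP.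
move=> [b [cb e]]; exists (pullback phi b); split; first exact: is_cochain_pullback.
by move=> s; rewrite -pullback_coboundary /pullback e.
Qed.

End singular_cochains.

Lemma pullback_id {K : comPzRingType} {X : topologicalType} n (c : cochain K X n) :
  is_cochain c -> pullback idfun c = c.
Proof.
move=> [_ cz]; apply: funext => s; rewrite /pullback.
by case: asboolP => // ns; rewrite cz.
Qed.

Definition prism {A X : topologicalType} (H : A * real -> X) (m i : nat)
  (s : simplex_space m -> A) : simplex_space m.+1 -> X :=
  fun x => H (s (merge_map m i x), prism_time m i x).

(* Level 0 is the top H (s x, 1); on the simplex, level m+1 is the bottom
   H (s x, 0). *)
Definition prism_slice {A X : topologicalType} (H : A * real -> X) (m l : nat)
  (s : simplex_space m -> A) : simplex_space m -> X :=
  fun x => H (s x, 1 - psum (coordn x) l).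

Arguments prism {A X} H m i s x.
Arguments prism_slice {A X} H m l s x.

Section prism.
Context {A X : topologicalType} (H : A * real -> X).

Lemma sing_simplex_prism m i (s : simplex_space m -> A) :
  {within setT `*` `[0%R, 1%R], continuous H} -> (i <= m)%N ->
  is_sing_simplex s -> is_sing_simplex (prism H m i s).
Proof.
move=> cH im cs.
apply: (subspace_continuous_comp (g := fun x => (s (merge_map m i x), prism_time m i x)) _ _ cH).
  by move=> x sx; split => //=; exact: prism_time_itv.
apply: within_continuous_pair; last exact/continuous_subspaceT/prism_time_continuous.
apply: (subspace_continuous_comp _ _ cs); first by move=> x; exact: merge_map_simplex.
exact/continuous_subspaceT/merge_map_continuous.
Qed.

Lemma prism_face_diag m i (s : simplex_space m -> A) : (i <= m)%N ->
  prism H m i s \o face_map (inord i) = prism_slice H m i s.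
Proof.
move=> im; apply: funext => x; rewrite /prism /prism_slice /prism_time /=.
by rewrite merge_map_face_diag // coordn_face_inord ?psum_insert0 ?ifF //; lia.
Qed.

Lemma prism_face_diagS m i (s : simplex_space m -> A) : (i <= m)%N ->
  prism H m i s \o face_map (inord i.+1) = prism_slice H m i.+1 s.
Proof.
move=> im; apply: funext => x; rewrite /prism /prism_slice /prism_time /=.
by rewrite merge_map_face_diagS // coordn_face_inord ?psum_insert0 ?ifT //; lia.
Qed.

Lemma prism_face_lt k i j (s : simplex_space k.+1 -> A) : (j < i)%N -> (i <= k.+1)%N ->
  prism H k.+1 i s \o face_map (inord j) = prism H k i.-1 (s \o face_map (inord j)).
Proof.
move=> ji ik; apply: funext => x; rewrite /prism /prism_time /=.
rewrite merge_map_face_lt // coordn_face_inord ?psum_insert0 ?ifF; try lia.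
by rewrite prednK //; lia.
Qed.

Lemma prism_face_gt k i j (s : simplex_space k.+1 -> A) : (i.+1 < j)%N -> (j <= k.+2)%N ->
  prism H k.+1 i s \o face_map (inord j) = prism H k i (s \o face_map (inord j.-1)).
Proof.
move=> ij jk; apply: funext => x; rewrite /prism /prism_time /=.
by rewrite merge_map_face_gt // coordn_face_inord ?psum_insert0 ?ifT //; lia.
Qed.

End prism.

Section prism_cochains.
Context {K : comPzRingType} {A X : topologicalType} (H : A * real -> X).
Hypothesis cH : {within setT `*` `[0%R, 1%R], continuous H}.

Definition prism_term m (c : cochain K X m) (s : simplex_space m -> A) (i j : nat) : K :=
  (-1) ^+ i * ((-1) ^+ j * c (prism H m i s \o face_map (inord j))).

Definition prism_operator k (c : cochain K X k.+1) : cochain K A k :=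
  fun s => if `[< is_sing_simplex s >] then
    \sum_(0 <= i < k.+1) (-1) ^+ i * c (prism H k i s) else 0.

Lemma is_cochain_prism_operator k (c : cochain K X k.+1) :
  is_cochain c -> is_cochain (prism_operator c).
Proof.
move=> [ce cz]; split => [s t st|s ns]; last by rewrite /prism_operator asboolF.
rewrite /prism_operator; case: asboolP => cs; case: asboolP => ct //.
- apply: eq_big_nat => i /andP[_ ik]; congr (_ * _); apply: ce => x sx.
  by rewrite /prism st //; apply: merge_map_simplex => //; lia.
- by case: ct; exact: sing_simplex_eq st cs.
- by case: cs; apply: sing_simplex_eq ct => x /st.
Qed.

Section cocycle.
Variables (m : nat) (c : cochain K X m) (s : simplex_space m -> A).
Hypotheses (cc : is_cocycle c) (cs : is_sing_simplex s).

Lemma prism_terms_row i : (i <= m)%N -> \sum_(0 <= j < m.+2) prism_term c s i j = 0.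
Proof.
move=> im; rewrite big_mkord /prism_term -mulr_sumr.
under eq_bigr => j _ do rewrite inord_val.
have := cc.2 (prism H m i s); rewrite /coboundary asboolT; last exact: sing_simplex_prism.
by move=> ->; rewrite mulr0.
Qed.

(* The faces i and i+1 of the i-th prism simplex are the slices at levels
   i and i+1; all other faces are shared with neighbouring prisms. *)
Lemma prism_terms_row_split i : (i <= m)%N ->
  \sum_(0 <= j < m.+2) prism_term c s i j =
  \sum_(0 <= j < i) prism_term c s i j
  + (c (prism_slice H m i s) - c (prism_slice H m i.+1 s))
  + \sum_(i.+2 <= j < m.+2) prism_term c s i j.
Proof.
move=> im; rewrite (@big_cat_nat _ _ _ i) //=; last by lia.
rewrite (@big_ltn _ _ _ i) ?(@big_ltn _ _ _ i.+1); try lia.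
rewrite /prism_term signrMK prism_face_diag // exprS mulN1r mulNr mulrN signrMK.
by rewrite prism_face_diagS // !addrA.
Qed.

Lemma cocycle_prism_terms :
  c (prism_slice H m 0 s) - c (prism_slice H m m.+1 s)
  + \sum_(0 <= i < m.+1) \sum_(0 <= j < i) prism_term c s i j
  + \sum_(0 <= i < m.+1) \sum_(i.+2 <= j < m.+2) prism_term c s i j = 0.
Proof.
have rows : \sum_(0 <= i < m.+1) \sum_(0 <= j < m.+2) prism_term c s i j = 0.
  by rewrite big_nat big1 // => i /andP[_ im]; apply: prism_terms_row; lia.
have split_rows := fun i (im : (0 <= i < m.+1)%N) =>
  prism_terms_row_split (i := i) (ltac:(lia)).
have tel : \sum_(0 <= i < m.+1) (c (prism_slice H m i s) - c (prism_slice H m i.+1 s))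
    = c (prism_slice H m 0 s) - c (prism_slice H m m.+1 s).
  rewrite (@telescope_sumr_eq _ 0 m.+1 (fun l => - c (prism_slice H m l s))) //.
    by rewrite opprK addrC.
  by move=> l _; rewrite opprK addrC.
rewrite (eq_big_nat _ _ split_rows) big_split big_split /= tel in rows.
by rewrite -[RHS]rows [in RHS](addrC _ (_ - _)).
Qed.

End cocycle.
Section coboundary.
Variables (k : nat) (c : cochain K X k.+1) (s : simplex_space k.+1 -> A).

Definition face_prism_term (i j : nat) : K :=
  (-1) ^+ i * ((-1) ^+ j * c (prism H k i (s \o face_map (inord j)))).

Lemma prism_terms_lower :
  \sum_(0 <= i < k.+2) \sum_(0 <= j < i) prism_term c s i j =
  \sum_(0 <= i < k.+1) \sum_(0 <= j < i.+1) - face_prism_term i j.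
Proof.
rewrite big_nat_recl // [X in X + _]big_geq // add0r.
apply: eq_big_nat => i /andP[_ ik]; apply: eq_big_nat => j /andP[_ ji].
by rewrite /prism_term prism_face_lt //= /face_prism_term exprS mulN1r mulNr.
Qed.

Lemma prism_terms_upper :
  \sum_(0 <= i < k.+2) \sum_(i.+2 <= j < k.+3) prism_term c s i j =
  \sum_(0 <= i < k.+1) \sum_(i.+1 <= j < k.+2) - face_prism_term i j.
Proof.
rewrite big_nat_recr //= [X in _ + X]big_geq // addr0.
apply: eq_big_nat => i /andP[_ ik]; rewrite big_add1 /=.
apply: eq_big_nat => j /andP[ij jk].
by rewrite /prism_term prism_face_gt //= /face_prism_term exprS mulN1r mulNr mulrN.
Qed.

Lemma face_prism_terms_sum : is_sing_simplex s ->
  \sum_(0 <= i < k.+1) \sum_(0 <= j < k.+2) face_prism_term i j =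
  coboundary (prism_operator c) s.
Proof.
move=> cs; rewrite exchange_big_nat /= /coboundary asboolT // big_mkord.
apply: eq_bigr => j _; rewrite /prism_operator asboolT; last exact: sing_simplex_face.
by rewrite mulr_sumr; apply: eq_big_nat => i _; rewrite /face_prism_term inord_val mulrCA.
Qed.

End coboundary.

Lemma prism_slices_coboundary k (c : cochain K X k.+1) s : is_cocycle c -> is_sing_simplex s ->
  c (prism_slice H k.+1 0 s) - c (prism_slice H k.+1 k.+2 s) = coboundary (prism_operator c) s.
Proof.
move=> cc cs; have := cocycle_prism_terms cc cs.
rewrite prism_terms_lower prism_terms_upper -addrA -big_split /=.
under eq_big_nat => i /andP[_ ik].
  rewrite -big_cat_nat ?sumrN; [|lia|lia].
over.
by rewrite sumrN face_prism_terms_sum // => /eqP; rewrite subr_eq0 => /eqP.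
Qed.

Lemma prism_slices0 (c : cochain K X 0) s : is_cocycle c -> is_sing_simplex s ->
  c (prism_slice H 0 0 s) = c (prism_slice H 0 1 s).
Proof.
move=> cc cs; have := cocycle_prism_terms cc cs.
by rewrite !big_nat1 !big_geq // !addr0 => /eqP; rewrite subr_eq0 => /eqP.
Qed.

End prism_cochains.

(** * Homotopy invariance and the homotopy weight *)

Section homotopy_pullback.
Context {K : comPzRingType} {A X : topologicalType} (h0 h1 : A -> X) (H : A * real -> X).
Hypotheses (cH : {within setT `*` `[0%R, 1%R], continuous H})
  (H0 : forall a, H (a, 0) = h0 a) (H1 : forall a, H (a, 1) = h1 a).

Lemma prism_slice_first n (s : simplex_space n -> A) : prism_slice H n 0 s = h1 \o s.
Proof. by apply: funext => x; rewrite /prism_slice psum0 subr0 H1. Qed.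

Lemma prism_slice_last n (c : cochain K X n) (s : simplex_space n -> A) :
  is_cochain c -> c (prism_slice H n n.+1 s) = c (h0 \o s).
Proof.
move=> [ce _]; apply: ce => x /std_simplexE [_ x1].
by rewrite /prism_slice x1 subrr H0.
Qed.

Lemma pullback_homotopy0 (c : cochain K X 0) : is_cocycle c -> pullback h0 c = pullback h1 c.
Proof.
move=> cc; apply: funext => s; rewrite /pullback; case: asboolP => // cs.
by rewrite -prism_slice_last -?(prism_slices0 cH) ?prism_slice_first //; case: cc.
Qed.

Lemma pullback_homotopyS k (c : cochain K X k.+1) s : is_cocycle c ->
  pullback h1 c s = pullback h0 c s + coboundary (prism_operator H c) s.
Proof.
move=> cc; rewrite /pullback; case: asboolP => cs; last by rewrite coboundary_nonsing ?addr0.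
rewrite -(prism_slices_coboundary cH) // prism_slice_first prism_slice_last; last by case: cc.
by rewrite addrC subrK.
Qed.

End homotopy_pullback.

Lemma homotopic_is_coboundary_pullback {K : comPzRingType} {A X : topologicalType}
    (h0 h1 : A -> X) n (c : cochain K X n) :
  homotopic h0 h1 -> is_cocycle c ->
  is_coboundary (pullback h0 c) <-> is_coboundary (pullback h1 c).
Proof.
move=> [H [cH [H0 H1]]] cc.
have {}H0 a : H (a, 0) = h0 a by exact: H0.
have {}H1 a : H (a, 1) = h1 a by exact: H1.
case: n c cc => [|k] c cc; first by rewrite (pullback_homotopy0 cH H0 H1 cc).
have cP : is_cochain (prism_operator H c) by apply: is_cochain_prism_operator; case: cc.
have hE := pullback_homotopyS cH H0 H1 _ cc.
split => -[b [cb e]].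
  exists (fun t => b t + prism_operator H c t); split; first exact: is_cochainD.
  by move=> s; rewrite coboundaryD hE e.
exists (fun t => b t - prism_operator H c t); split; first exact: is_cochainB.
by move=> s; rewrite coboundaryB -e hE addrK.
Qed.

Section homotopy_weight.
Context {K : comPzRingType} {X Y X' Y' : topologicalType}.
Variables (f g : X -> Y) (f' g' : X' -> Y') (alpha : X' -> X) (beta : Y' -> Y).
Hypotheses (cf : continuous f) (cg : continuous g) (cf' : continuous f') (cg' : continuous g').
Hypotheses (calpha : continuous alpha) (cbeta : continuous beta).
Hypotheses (ef : beta \o f' = f \o alpha) (eg : beta \o g' = g \o alpha).

Lemma hw_prop_pullback (u : forall n, cochain K X n) k :
  hw_prop f g u k -> hw_prop f' g' (cohom_pullback alpha u) k.
Proof.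
move=> hwu A phi cphi [n [kn [U [oU [cU hU]]]]] m.
rewrite /cohom_pullback pullback_comp //.
apply: (hwu _ _ (continuousT_comp cphi calpha)); exists n; split => //.
exists U; do 2 split => //; move=> j.
have -> : f \o (alpha \o phi) = beta \o (f' \o phi) by rewrite compA -ef.
have -> : g \o (alpha \o phi) = beta \o (g' \o phi) by rewrite compA -eg.
exact: homotopic_on_comp.
Qed.

Variables (alpha' : X -> X') (beta' : Y -> Y').
Hypotheses (calpha' : continuous alpha') (cbeta' : continuous beta').
Hypotheses (alpha_alpha' : homotopic (alpha \o alpha') idfun)
  (beta'_beta : homotopic (beta' \o beta) idfun).

Lemma homotopic_intertwine (F : X -> Y) (F' : X' -> Y') :
  continuous F -> continuous F' -> beta \o F' = F \o alpha ->
  homotopic (F' \o alpha') (beta' \o F).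
Proof.
move=> cF cF' eF; apply: (@homotopic_on_trans _ _ _ _ (beta' \o F \o alpha \o alpha')).
  apply: homotopic_on_sym; apply: homotopic_on_eq
    (homotopic_on_precomp (continuousT_comp calpha' cF') (fun _ _ => I) beta'_beta) => x _ //=.
  by rewrite -[F (alpha _)]/((F \o alpha) _) -eF.
by apply: homotopic_on_eq (homotopic_on_comp (continuousT_comp cF cbeta') alpha_alpha') => x _.
Qed.

Lemma hw_prop_of_pullback (u : forall n, cochain K X n) k :
  (forall n, is_cocycle (u n)) ->
  hw_prop f' g' (cohom_pullback alpha u) k -> hw_prop f g u k.
Proof.
move=> cu hwu A phi cphi [n [kn [U [oU [cU hU]]]]] m.
have intertwine F F' (V : set A) : continuous F -> continuous F' ->
    beta \o F' = F \o alpha -> homotopic_on V (F' \o (alpha' \o phi)) (beta' \o (F \o phi)).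
  move=> cF cF' eF; apply: homotopic_on_eq
    (homotopic_on_precomp cphi (fun _ _ => I) (homotopic_intertwine cF cF' eF)) => x _ //.
have hd : hdist_le (f' \o (alpha' \o phi)) (g' \o (alpha' \o phi)) k.
  exists n; split => //; exists U; do 2 split => //; move=> j.
  apply: homotopic_on_trans (intertwine _ _ _ cf cf' ef) _.
  apply: homotopic_on_trans (homotopic_on_sym (intertwine _ _ _ cg cg' eg)).
  exact: homotopic_on_comp cbeta' (hU j).
have hphi : homotopic (alpha \o (alpha' \o phi)) phi.
  by apply: homotopic_on_eq (homotopic_on_precomp cphi (fun _ _ => I) alpha_alpha') => x.
apply/(homotopic_is_coboundary_pullback hphi (cu m)).
have cpsi := continuousT_comp cphi calpha'.
by rewrite -pullback_comp //; exact: hwu _ _ cpsi hd m.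
Qed.

Lemma cohom_zero_pullback (u : forall n, cochain K X n) :
  (forall n, is_cocycle (u n)) ->
  cohom_zero (cohom_pullback alpha u) <-> cohom_zero u.
Proof.
move=> cu; split => z m; last exact: is_coboundary_pullback.
have := is_coboundary_pullback calpha' (z m); rewrite /cohom_pullback pullback_comp //.
by move/(homotopic_is_coboundary_pullback alpha_alpha' (cu m)); rewrite pullback_id //; case: (cu m).
Qed.

End homotopy_weight.

Lemma hw_eq {K : comPzRingType} {X Y X' Y' : topologicalType} (f g : X -> Y) (f' g' : X' -> Y')
    (u : forall n, cochain K X n) (v : forall n, cochain K X' n) :
  (cohom_zero v <-> cohom_zero u) -> (forall k, hw_prop f' g' v k <-> hw_prop f g u k) ->
  hw f' g' v = hw f g u.
Proof.
move=> zE pE.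
have gE k : hw_greatest f' g' v k <-> hw_greatest f g u k.
  by split=> -[/pE p max]; split=> // j /pE; exact: max.
rewrite /hw; case: (pselect (cohom_zero v)) => zv; case: (pselect (cohom_zero u)) => zu //.
- by case: zu; apply/zE.
- by case: zv; apply/zE.
case: (pselect (exists k, hw_greatest f' g' v k)) => ev;
  case: (pselect (exists k, hw_greatest f g u k)) => eu //.
- case: (cid ev) => kv [pv maxv]; case: (cid eu) => ku [pu maxu] /=.
  by rewrite (@le_anti _ _ kv ku) // maxu ?maxv //; apply/pE.
- by case: eu; case: ev => k /gE; exists k.
- by case: ev; case: eu => k /gE; exists k.
Qed.

Unset Implicit Arguments.

Theorem proposition5p6 (K : comPzRingType) (X Y X' Y' : topologicalType)
  (f g : X -> Y) (f' g' : X' -> Y') (alpha : X' -> X) (beta : Y' -> Y) :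
  continuous f -> continuous g -> continuous f' -> continuous g' ->
  homotopy_equivalence alpha -> homotopy_equivalence beta ->
  beta \o f' = f \o alpha -> beta \o g' = g \o alpha ->
  forall u : forall n, cochain K X n, cohom_elt u ->
    hw f' g' (cohom_pullback alpha u) = hw f g u.
Proof.
move=> cf cg cf' cg' [calpha [alpha' [calpha' [_ alpha_alpha']]]].
move=> [cbeta [beta' [cbeta' [beta'_beta _]]]] ef eg u [cu _].
apply: hw_eq; first exact: cohom_zero_pullback.
move=> k; split; last exact: hw_prop_pullback.
exact: (hw_prop_of_pullback cf cg cf' cg' ef eg calpha' cbeta' alpha_alpha' beta'_beta cu).
Qed.
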